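(* In Ruleset D, for any superposition of single Nim heaps, $\langle \mathrm{Nim}(i_1),\ldots,\mathrm{Nim}(i_\ell)\rangle_D\equiv *k$ where $k=\max_{1\le j\le\ell} i_j$.
   Context: Single-heap Nim: $\mathrm{Nim}(x)$ is a heap of $x$ tokens; classical move $(1,-j)$, $j\ge1$, removes $j$ tokens and is illegal if fewer than $j$ tokens remain. Quantum variation: a position is a nonempty finite set $\langle G_1,\ldots,G_n\rangle$ of classical positions; a classical move is legal if legal in some $G_i$; a Q-move is a nonempty set of legal classical moves, leading to the superposition of all legal results of applying one of its moves to one of the $G_i$. Ruleset D (subscript $D$): every Q-move, including a single classical move, is allowed. The player with no allowed Q-move loses. $\equiv$ is game equivalence, $*k$ the value of a classical Nim heap of $k$ tokens. *)

From mathcomp Require Import all_boot.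
Set Implicit Arguments. Unset Strict Implicit. Unset Printing Implicit Defensive.

Record igame := IGame {
  pos : Type;
  move : pos -> pos -> Prop;   (* move p q : q is an option of p *)
  start : pos }.

Inductive Lose (P : Type) (mv : P -> P -> Prop) (p : P) : Prop :=
  | LoseI : (forall q, mv p q -> Win mv q) -> Lose mv p
with Win (P : Type) (mv : P -> P -> Prop) (p : P) : Prop :=
  | WinI : forall q, mv p q -> Lose mv q -> Win mv p.

Definition short (G : igame) : Prop :=
  Acc (fun q p => @move G p q) (start G).

Definition sum_move (G H : igame) (a b : pos G * pos H) : Prop :=
  (@move G a.1 b.1 /\ b.2 = a.2) \/ (b.1 = a.1 /\ @move H a.2 b.2).

Definition gsum (G H : igame) : igame :=
  @IGame (pos G * pos H)%type (@sum_move G H) (start G, start H).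

Definition gequiv (G H : igame) : Prop :=
  forall X : igame, short X ->
    (Lose (@move (gsum G X)) (start (gsum G X)) <->
     Lose (@move (gsum H X)) (start (gsum H X))).

Definition nim (k : nat) : igame := @IGame nat (fun a b => b < a) k.

(* A position is a (nonempty, finite)
   set of heap sizes, represented by a seq nat read as a set (membership).
   A Q-move is a nonempty set J of classical moves (1,-j), each legal in some
   G_i (j >= 1 and j <= i for some i in S); the result is the set of all
   legal results i - j (i in S, j in J, j <= i). *)
Definition qmoveD (S T : seq nat) : Prop :=
  exists J : seq nat,
    J != [::] /\
    (forall j, j \in J -> 0 < j /\ exists2 i, i \in S & j <= i) /\
    (forall x, x \in T <-> exists i j, [/\ i \in S, j \in J, j <= i & x = i - j]).

Definition qnimD (s : seq nat) : igame := @IGame (seq nat) qmoveD s.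

(* The largest heap of a superposition behaves exactly like a classical Nim
   heap: every Q-move lowers it (each removed amount j is positive and
   bounded by some heap), and any smaller value y is reached by the single
   classical move that removes (max - y) tokens, which lands the maximal heap
   on y and every other surviving heap below it.  So the map S |-> max S
   sends moves to moves and lifts every move of the image; such a map, taken
   componentwise in a disjunctive sum, preserves losing positions. *)
From mathcomp Require Import all_boot.

Set Implicit Arguments.
Unset Strict Implicit.
Unset Printing Implicit Defensive.

Record move_morphism (P Q : Type) (mvP : P -> P -> Prop) (mvQ : Q -> Q -> Prop)
    (f : P -> Q) : Prop := MoveMorphism {
  morph_move : forall p p', mvP p p' -> mvQ (f p) (f p');
  morph_lift : forall p q', mvQ (f p) q' -> exists2 p', mvP p p' & f p' = q' }.

Scheme Lose_min := Minimality for Lose Sort Prop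
with Win_min := Minimality for Win Sort Prop.

Section MoveMorphismOutcome.

Variables (P Q : Type) (mvP : P -> P -> Prop) (mvQ : Q -> Q -> Prop) (f : P -> Q).
Hypothesis f_morph : move_morphism mvP mvQ f.

Lemma Lose_morph p : Lose mvP p -> Lose mvQ (f p).
Proof.
move: p; apply: (@Lose_min _ mvP (fun p => Lose mvQ (f p)) (fun p => Win mvQ (f p)))
  => [p _ IHwin | p p' mv_pp' _ IHlose].
- constructor=> q' /(morph_lift f_morph) [p' mv_pp' <-]; exact: IHwin.
- exact: WinI (morph_move f_morph mv_pp') IHlose.
Qed.

Lemma morph_Lose q : Lose mvQ q -> forall p, f p = q -> Lose mvP p.
Proof.
move: q; apply: (@Lose_min _ mvQ (fun q => forall p, f p = q -> Lose mvP p)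
  (fun q => forall p, f p = q -> Win mvP p)) => [q _ IHwin | q q' mv_qq' _ IHlose] p fp_q.
- constructor=> p' mv_pp'; apply: IHwin (erefl _).
  by rewrite -fp_q; apply: (morph_move f_morph).
- rewrite -fp_q in mv_qq'; have [p' mv_pp' fp'_q'] := morph_lift f_morph mv_qq'.
  exact: WinI mv_pp' (IHlose _ fp'_q').
Qed.

Lemma Lose_morphE p : Lose mvP p <-> Lose mvQ (f p).
Proof. by split=> [/Lose_morph | /morph_Lose]; apply. Qed.

End MoveMorphismOutcome.

Lemma sum_move_morph (G H X : igame) (f : pos G -> pos H) :
    move_morphism (@move G) (@move H) f ->
  move_morphism (@sum_move G X) (@sum_move H X) (fun a => (f a.1, a.2)).
Proof.
move=> f_morph; split=> [[p x] [p' x'] | [p x] [q' x']].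
- by case=> [[/= /(morph_move f_morph) mv ->] | [/= -> mv]]; [left | right].
- case=> [[/= /(morph_lift f_morph) [p' mv <-] ->] | [/= -> mv]].
  + by exists (p', x) => //; left.
  + by exists (p, x') => //; right.
Qed.

Lemma gequiv_morph (G H : igame) (f : pos G -> pos H) :
  move_morphism (@move G) (@move H) f -> f (start G) = start H -> gequiv G H.
Proof.
move=> f_morph f_start X _; rewrite /gsum /= -f_start.
exact: (Lose_morphE (sum_move_morph X f_morph) (start G, start X)).
Qed.

Definition heap_max (S : seq nat) : nat := \max_(i <- S) i.

Lemma heap_max_ub S i : i \in S -> i <= heap_max S.
Proof. by move=> iS; apply: (leq_bigmax_seq (F := fun i => i) i iS). Qed.

Lemma heap_max_mem S : 0 < heap_max S -> heap_max S \in S.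
Proof.
have : (heap_max S == 0) || (heap_max S \in S).
  rewrite /heap_max big_seq; apply: (big_ind (fun m => (m == 0) || (m \in S))).
  - by rewrite eqxx.
  - by move=> m n m0S n0S; case: leqP.
  - by move=> i ->; rewrite orbT.
by case/orP=> [/eqP -> | ].
Qed.

Lemma qmoveD_heap_max_lt S T : qmoveD S T -> heap_max T < heap_max S.
Proof.
case=> -[|j0 J] [J_nonempty [J_legal T_def]] //.
have [j0_gt0 [i0 i0S j0_le_i0]] := J_legal j0 (mem_head _ _).
have maxS_gt0 : 0 < heap_max S.
  exact: leq_trans j0_gt0 (leq_trans j0_le_i0 (heap_max_ub i0S)).
rewrite -(prednK maxS_gt0) ltnS; apply/bigmax_leqP_seq => x.
case/T_def=> i [j [iS jJ j_le_i ->]] _; have [j_gt0 _] := J_legal j jJ.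
rewrite -ltnS prednK // (leq_trans _ (heap_max_ub iS)) //.
by rewrite ltn_subrL j_gt0 (leq_trans j_gt0 j_le_i).
Qed.

Definition remove_tokens (j : nat) (S : seq nat) : seq nat :=
  [seq i - j | i <- S & j <= i].

Lemma qmoveD_remove_tokens S j :
  0 < j <= heap_max S -> qmoveD S (remove_tokens j S).
Proof.
case/andP=> j_gt0 j_le_max; exists [:: j]; split=> //; split.
- move=> j'; rewrite mem_seq1 => /eqP ->; split=> //.
  by exists (heap_max S) => //; apply/heap_max_mem/(leq_trans j_gt0).
- move=> x; split.
  + case/mapP=> i /[!mem_filter] /andP [j_le_i iS] ->.
    by exists i, j; rewrite mem_seq1.
  + case=> i [j' [iS]]; rewrite mem_seq1 => /eqP -> j_le_i ->.
    by apply: map_f; rewrite mem_filter j_le_i.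
Qed.

Lemma heap_max_remove_tokens S j :
  j <= heap_max S -> heap_max (remove_tokens j S) = heap_max S - j.
Proof.
move=> j_le_max; apply/eqP; rewrite eqn_leq; apply/andP; split.
- apply/bigmax_leqP_seq=> _ /mapP [i /[!mem_filter] /andP [_ iS] ->] _.
  exact: leq_sub2r (heap_max_ub iS).
- have [-> | max_gt0] := posnP (heap_max S); first by rewrite sub0n.
  by apply/heap_max_ub/map_f; rewrite mem_filter j_le_max heap_max_mem.
Qed.

Lemma heap_max_move_morph : move_morphism qmoveD (fun m n : nat => n < m) heap_max.
Proof.
split=> [S T /qmoveD_heap_max_lt // | S y y_lt_max].
exists (remove_tokens (heap_max S - y) S).
  by apply: qmoveD_remove_tokens; rewrite subn_gt0 y_lt_max leq_subr.
by rewrite heap_max_remove_tokens ?leq_subr // subKn // ltnW.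
Qed.

Theorem lemma3 (s : seq nat) :
  s != [::] -> gequiv (qnimD s) (nim (\max_(i <- s) i)).
Proof.
move=> _; exact: (@gequiv_morph (qnimD s) (nim _) _ heap_max_move_morph (erefl _)).
Qed.
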